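(* Let $P \in S$ have degree $n > 0$ in $x$, and suppose its leading coefficient $p_n \in K[y]$ satisfies $0 < \deg_y(p_n) \leq n$. Then $C_S(P) = K[P]$.
   Context: Standing conventions: $K$ is a field, $R = K[y]$, $\sigma$ is a $K$-algebra endomorphism of $R$ with $\deg_y(\sigma(y)) > 1$, and $\delta$ is a $K$-linear $\sigma$-derivation of $R$ ($\delta(ab) = \sigma(a)\delta(b) + \delta(a)b$). $S = R[x;\sigma,\delta]$ is the Ore extension (polynomials $\sum r_i x^i$, $r_i\in R$, with $xr = \sigma(r)x + \delta(r)$). Degree of an element of $S$ means degree in $x$; its leading coefficient is the coefficient in $K[y]$ of the highest power of $x$. $C_S(P)$ is the centralizer of $P$ in $S$, and $K[P] = \{\sum_i c_i P^i : c_i \in K\}$. *)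

From HB Require Import structures.
From mathcomp Require Import all_boot all_order all_algebra.
Set Implicit Arguments. Unset Strict Implicit. Unset Printing Implicit Defensive.
Import GRing.Theory.
Local Open Scope ring_scope.

(* Elements of the Ore extension S = R[x; sigma, delta], R = K[y], are
   represented by their coefficient list in x: an element of
   {poly {poly K}}, i.e. sum_i r_i x^i with r_i in K[y] (coefficients on the
   left).  The additive structure is the one of {poly {poly K}}; the
   multiplication is the Ore product [omul] defined below. *)

Section Ore.
Variable K : fieldType.
Variables (sigma delta : {poly K} -> {poly K}).

(* left multiplication by x:
   x * (sum r_j x^j) = sum (sigma(r_j) x^(j+1) + delta(r_j) x^j) *)
Definition xmul (q : {poly {poly K}}) : {poly {poly K}} :=
  map_poly sigma q * 'X + map_poly delta q.

Definition omul (p q : {poly {poly K}}) : {poly {poly K}} :=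
  \sum_(i < size p) (p`_i)%:P * iter i xmul q.

Definition opow (p : {poly {poly K}}) (n : nat) : {poly {poly K}} :=
  iter n (omul p) 1.

Definition is_Kalg_endo : Prop :=
  [/\ forall a b, sigma (a + b) = sigma a + sigma b,
      forall a b, sigma (a * b) = sigma a * sigma b,
      sigma 1 = 1 &
      forall (c : K) a, sigma (c *: a) = c *: sigma a].

Definition is_sigma_derivation : Prop :=
  [/\ forall a b, delta (a + b) = delta a + delta b,
      forall (c : K) a, delta (c *: a) = c *: delta a &
      forall a b, delta (a * b) = sigma a * delta b + delta a * b].

Definition centralizer (P Q : {poly {poly K}}) : Prop := omul P Q = omul Q P.

Definition in_KP (P Q : {poly {poly K}}) : Prop :=
  exists cs : seq K, Q = \sum_(i < size cs) omul (cs`_i)%:P%:P (opow P i).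

End Ore.

From HB Require Import structures.
From mathcomp Require Import all_boot all_order all_algebra.
From mathcomp Require Import zify.
Import GRing.Theory.
Local Open Scope ring_scope.

(* K[P] <= C_S(P) because the Ore product is associative and K-bilinear.
   Conversely, let Q in C_S(P) have degree m and leading coefficient q.
   Comparing the leading coefficients of PQ = QP gives the equation
   p_n sigma^n(q) = q sigma^m(p_n).  Since sigma multiplies y-degrees by
   e = deg sigma(y) >= 2, taking degrees yields d + deg(q) e^n = deg(q) + d e^m
   with d = deg p_n, and a gcd argument on the numbers e^a - 1 shows that n
   divides m.  All nonzero solutions of the leading-coefficient equation have
   the same degree, so they form a K-line; as P^(m/n) also has degree m and
   commutes with P, q = c lead(P^(m/n)) for some c in K, and Q - c P^(m/n) lies
   in C_S(P) and has smaller degree.  Induction on the degree concludes. *)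

Section ExpnSub1.
Variable e : nat.
Hypothesis e_gt0 : (0 < e)%N.

Lemma expn_sub1D a b : (e ^ (a + b) - 1 = e ^ b * (e ^ a - 1) + (e ^ b - 1))%N.
Proof.
have hA : (0 < e ^ a)%N by rewrite expn_gt0 e_gt0.
have hB : (0 < e ^ b)%N by rewrite expn_gt0 e_gt0.
rewrite expnD; move: (e ^ a)%N (e ^ b)%N hA hB => A B; nia.
Qed.

Lemma dvdn_expn_sub1 b q : (e ^ b - 1 %| e ^ (q * b) - 1)%N.
Proof.
elim: q => [|q IH]; first by rewrite mul0n expn0 subnn dvdn0.
by rewrite mulSn expn_sub1D dvdn_add // dvdn_mull.
Qed.

Lemma gcdn_expn_sub1 a b :
  gcdn (e ^ a - 1) (e ^ b - 1) = (e ^ gcdn a b - 1)%N.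
Proof.
elim/ltn_ind: b a => b IH a.
have [->|b_gt0] := posnP b; first by rewrite expn0 subnn !gcdn0.
have [k hk] := dvdnP (dvdn_expn_sub1 b (a %/ b)).
rewrite gcdnC {1}(divn_eq a b) expn_sub1D hk mulnA gcdnMDl.
by rewrite IH ?ltn_mod // gcdn_modr gcdnC.
Qed.

End ExpnSub1.

Lemma double_leq_expn e k : (2 <= e)%N -> (2 * k <= e ^ k)%N.
Proof.
move=> e_ge2; elim: k => [|k IH]; first by rewrite expn0.
have hpos : (0 < e ^ k)%N by rewrite expn_gt0 (leq_trans _ e_ge2).
rewrite expnS; case: k IH hpos => [|k] IH hpos; first by rewrite expn0; lia.
move: (e ^ k.+1)%N IH hpos => E; nia.
Qed.

Lemma expn_sub1_gap e d n g : (2 <= e)%N -> (0 < g)%N -> (2 * g <= n)%N ->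
  (d <= n)%N -> (d * (e ^ g - 1) < e ^ n - 1)%N.
Proof.
move=> e_ge2 g_gt0 g_half d_le_n.
have lt_gn : (g < n)%N by rewrite (leq_trans _ g_half) // ltn_Pmull.
have split_n : (e ^ n - 1 = e ^ (n - g) * (e ^ g - 1) + (e ^ (n - g) - 1))%N.
  by rewrite -expn_sub1D ?(leq_trans _ e_ge2) // subnKC // ltnW.
have big_exp : (n <= e ^ (n - g))%N.
  by have := double_leq_expn e (n - g) e_ge2; lia.
have small_exp : (1 < e ^ (n - g))%N.
  by rewrite -(exp1n (n - g)) ltn_exp2r // subn_gt0.
rewrite split_n -addn1 leq_add ?subn_gt0 //.
by rewrite leq_mul2r (leq_trans d_le_n big_exp) orbT.
Qed.

(* The arithmetic heart of the proof: the y-degrees of commuting leading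
   coefficients satisfy d + k e^n = k + d e^m; when e >= 2 and 0 < d <= n
   this forces n to divide m.  Indeed e^n - 1 divides d (e^m - 1), hence
   d (e^g - 1) for g = gcd(n, m), which is too small unless g = n. *)
Lemma degree_equation_dvdn e d n m k : (2 <= e)%N -> (0 < d <= n)%N ->
  (d + k * e ^ n = k + d * e ^ m)%N -> (n %| m)%N.
Proof.
move=> e_ge2 /andP[d_gt0 d_le_n] eq_deg.
have e_gt0 : (0 < e)%N by apply: leq_trans e_ge2.
have n_gt0 : (0 < n)%N by apply: leq_trans d_le_n.
set g := gcdn n m.
have dvd_m : (e ^ n - 1 %| d * (e ^ m - 1))%N.
  have hpos a : (0 < e ^ a)%N by rewrite expn_gt0 e_gt0.
  apply/dvdnP; exists k; move: eq_deg (hpos n) (hpos m).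
  move: (e ^ n)%N (e ^ m)%N => A B; nia.
have dvd_g : (e ^ n - 1 %| d * (e ^ g - 1))%N.
  by rewrite -gcdn_expn_sub1 // muln_gcdr dvdn_gcd dvd_m dvdn_mull.
have [g_eq_n|g_neq_n] := eqVneq g n; first by rewrite -g_eq_n dvdn_gcdr.
have g_gt0 : (0 < g)%N by rewrite gcdn_gt0 n_gt0.
have g_half : (2 * g <= n)%N.
  have [t def_n] := dvdnP (dvdn_gcdl n m); rewrite -/g in def_n.
  move: g_neq_n n_gt0; rewrite def_n; case: t {def_n} => [|[|t]] //; lia.
have eg_gt0 : (0 < e ^ g - 1)%N by rewrite subn_gt0 -{1}(expn0 e) ltn_exp2l.
have := expn_sub1_gap e d n g e_ge2 g_gt0 g_half d_le_n.
by rewrite ltnNge dvdn_leq // muln_gt0 d_gt0.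
Qed.

(* Solutions of the degree equation are unique: a (E - 1) = F - d. *)
Lemma degree_equation_inj d E F a b : (1 < E)%N ->
  (d + a * E = a + F)%N -> (d + b * E = b + F)%N -> a = b.
Proof. by move=> E_gt1 ha hb; nia. Qed.

Lemma degM (R : idomainType) (a b : {poly R}) : a != 0 -> b != 0 ->
  (size (a * b)).-1 = ((size a).-1 + (size b).-1)%N.
Proof.
move=> a_neq0 b_neq0; rewrite size_mul //.
move: a_neq0 b_neq0; rewrite -!size_poly_eq0.
by case: (size a) => // ? _; case: (size b) => // ? _; rewrite addSn addnS.
Qed.

Lemma size_sub_same_coef (R : nzRingType) (p q : {poly R}) m :
  (size p <= m.+1)%N -> (size q <= m.+1)%N -> p`_m = q`_m -> (size (p - q)%R <= m)%N.
Proof.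
move=> size_p size_q eq_m; apply/leq_sizeP => i; rewrite leq_eqVlt coefB.
case/orP => [/eqP <-|lt_mi]; first by rewrite eq_m subrr.
by rewrite !nth_default ?subr0 // (leq_trans _ lt_mi).
Qed.

Section Ore.
Variable K : fieldType.
Variables sigma delta : {poly K} -> {poly K}.
Hypothesis sigma_endo : is_Kalg_endo sigma.
Hypothesis delta_der : is_sigma_derivation sigma delta.
Hypothesis size_sigmaX : (2 < size (sigma 'X))%N.

Implicit Types (p q r : {poly {poly K}}) (a b : {poly K}) (c : K).

Local Notation xm := (xmul sigma delta).
Local Notation om := (omul sigma delta).
Local Notation e := (size (sigma 'X)).-1.

Lemma sigmaD a b : sigma (a + b) = sigma a + sigma b. Proof. by case: sigma_endo. Qed.
Lemma sigmaM a b : sigma (a * b) = sigma a * sigma b. Proof. by case: sigma_endo. Qed.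
Lemma sigma1 : sigma 1 = 1. Proof. by case: sigma_endo. Qed.
Lemma sigmaZ c a : sigma (c *: a) = c *: sigma a. Proof. by case: sigma_endo. Qed.
Lemma sigma0 : sigma 0 = 0. Proof. by have := sigmaZ 0 0; rewrite !scale0r. Qed.
Lemma sigmaN a : sigma (- a) = - sigma a. Proof. by rewrite -scaleN1r sigmaZ scaleN1r. Qed.
Lemma sigmaB a b : sigma (a - b) = sigma a - sigma b. Proof. by rewrite sigmaD sigmaN. Qed.
Lemma sigmaC c : sigma c%:P = c%:P. Proof. by rewrite -alg_polyC sigmaZ sigma1. Qed.

Lemma deltaD a b : delta (a + b) = delta a + delta b. Proof. by case: delta_der. Qed.
Lemma deltaZ c a : delta (c *: a) = c *: delta a. Proof. by case: delta_der. Qed.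
Lemma deltaM a b : delta (a * b) = sigma a * delta b + delta a * b.
Proof. by case: delta_der. Qed.
Lemma delta0 : delta 0 = 0. Proof. by have := deltaZ 0 0; rewrite !scale0r. Qed.

(* A sigma-derivation kills the constants: delta 1 = delta (1 * 1) = 2 delta 1. *)
Lemma deltaC c : delta c%:P = 0.
Proof.
have delta1 : delta 1 = 0.
  have := deltaM 1 1; rewrite !mulr1 sigma1 mul1r => twice.
  by apply: (addrI (delta 1)); rewrite addr0 -twice.
by rewrite -alg_polyC deltaZ delta1 scaler0.
Qed.

Lemma coef_xmul q i :
  (xm q)`_i = (if i == 0%N then 0 else sigma q`_i.-1) + delta q`_i.
Proof. by rewrite /xmul coefD coefMX !coef_map_id0 // (sigma0, delta0). Qed.

Lemma xmulD p q : xm (p + q) = xm p + xm q.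
Proof.
apply/polyP=> i; rewrite coefD !coef_xmul !coefD deltaD.
by case: (i == 0%N); rewrite ?sigmaD ?add0r // addrACA.
Qed.

Lemma xmul0 : xm 0 = 0.
Proof. by apply/polyP=> i; rewrite coef_xmul !coef0 sigma0 delta0 addr0; case: ifP. Qed.

Lemma xmul_sum (I : Type) (s : seq I) (F : I -> {poly {poly K}}) :
  xm (\sum_(i <- s) F i) = \sum_(i <- s) xm (F i).
Proof. by elim: s => [|x s IH]; rewrite ?big_nil ?xmul0 // !big_cons xmulD IH. Qed.

Lemma xmul_polyCM a p : xm (a%:P * p) = (sigma a)%:P * xm p + (delta a)%:P * p.
Proof.
apply/polyP=> i; rewrite coef_xmul coefD !coefCM coef_xmul deltaM mulrDr addrA.
by case: ifP => _; rewrite ?mulr0 ?add0r ?sigmaM.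
Qed.

Lemma xmul_scalar c p : xm (c%:P%:P * p) = c%:P%:P * xm p.
Proof. by rewrite xmul_polyCM sigmaC deltaC mul0r addr0. Qed.

Lemma iter_xmulD i p q : iter i xm (p + q) = iter i xm p + iter i xm q.
Proof. by elim: i => //= i ->; rewrite xmulD. Qed.

Lemma iter_xmul0 i : iter i xm 0 = 0.
Proof. by elim: i => //= i ->; rewrite xmul0. Qed.

Lemma iter_xmul_scalar i c p : iter i xm (c%:P%:P * p) = c%:P%:P * iter i xm p.
Proof. by elim: i => //= i ->; rewrite xmul_scalar. Qed.

Lemma iter_xmul1 i : iter i xm 1 = 'X^i.
Proof.
elim: i => [|i IH] //=; rewrite IH; apply/polyP=> j; rewrite coef_xmul !coefXn.
have delta_nat (b : bool) : delta b%:R = 0 by case: b; rewrite ?delta0 // -polyC1 deltaC.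
have sigma_nat (b : bool) : sigma b%:R = b%:R by case: b; rewrite ?sigma0 ?sigma1.
case: j => [|j] /=; first by rewrite add0r delta_nat.
by rewrite delta_nat addr0 sigma_nat eqSS.
Qed.

Lemma omul_widen N p q : (size p <= N)%N ->
  om p q = \sum_(i < N) (p`_i)%:P * iter i xm q.
Proof.
move=> le_pN; rewrite /omul (big_ord_widen N (fun i => (p`_i)%:P * iter i xm q) le_pN).
rewrite big_mkcond /=; apply: eq_bigr => i _; case: ltnP => // le_pi.
by rewrite nth_default // mul0r.
Qed.

Lemma omulDl p p' q : om (p + p') q = om p q + om p' q.
Proof.
set N := maxn (size p) (size p').
rewrite (omul_widen N) ?(leq_trans (size_polyD _ _)) // (omul_widen N p) ?leq_maxl //.
rewrite (omul_widen N p') ?leq_maxr // -big_split /=; apply: eq_bigr => i _.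
by rewrite coefD polyCD mulrDl.
Qed.

Lemma omul0l q : om 0 q = 0.
Proof. by rewrite /omul size_poly0 big_ord0. Qed.

Lemma omulBl p p' q : om (p - p') q = om p q - om p' q.
Proof. by apply/eqP; rewrite eq_sym subr_eq -omulDl subrK. Qed.

Lemma omulDr p q q' : om p (q + q') = om p q + om p q'.
Proof. by rewrite /omul -big_split; apply: eq_bigr => i _; rewrite iter_xmulD mulrDr. Qed.

Lemma omul0r p : om p 0 = 0.
Proof. by rewrite /omul big1 // => i _; rewrite iter_xmul0 mulr0. Qed.

Lemma omulBr p q q' : om p (q - q') = om p q - om p q'.
Proof. by apply/eqP; rewrite eq_sym subr_eq -omulDr subrK. Qed.

Lemma omul_suml (I : Type) (s : seq I) (F : I -> {poly {poly K}}) q :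
  om (\sum_(i <- s) F i) q = \sum_(i <- s) om (F i) q.
Proof. by elim: s => [|x s IH]; rewrite ?big_nil ?omul0l // !big_cons omulDl IH. Qed.

Lemma omul_sumr (I : Type) (s : seq I) (F : I -> {poly {poly K}}) p :
  om p (\sum_(i <- s) F i) = \sum_(i <- s) om p (F i).
Proof. by elim: s => [|x s IH]; rewrite ?big_nil ?omul0r // !big_cons omulDr IH. Qed.

Lemma omul_polyCMl a p q : om (a%:P * p) q = a%:P * om p q.
Proof.
have [->|a_neq0] := eqVneq a 0; first by rewrite !mul0r omul0l.
rewrite (omul_widen (size p)) ?size_Cmul // /omul big_distrr /=.
by apply: eq_bigr => i _; rewrite coefCM polyCM mulrA.
Qed.

Lemma omul_scalar_r c p q : om p (c%:P%:P * q) = c%:P%:P * om p q.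
Proof.
rewrite /omul big_distrr /=; apply: eq_bigr => i _.
by rewrite iter_xmul_scalar mulrCA.
Qed.

Lemma omul_scalar_l c q : om c%:P%:P q = c%:P%:P * q.
Proof. by rewrite (omul_widen 1) ?size_polyC ?leq_b1 // big_ord1 coefC. Qed.

Lemma omul1r p : om p 1 = p.
Proof.
rewrite /omul (eq_bigr (fun i : 'I_(size p) => p`_i *: 'X^i)).
  by rewrite -poly_def coefK.
by move=> i _; rewrite iter_xmul1 mul_polyC.
Qed.

Lemma omul1l q : om 1 q = q.
Proof. by rewrite -!polyC1 omul_scalar_l !polyC1 mul1r. Qed.

Lemma size_xmul_le q : (size (xm q) <= (size q).+1)%N.
Proof.
apply/leq_sizeP => j lt_qj; rewrite coef_xmul; case: j lt_qj => // j lt_qj.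
by rewrite !nth_default ?sigma0 ?delta0 ?addr0 // ltnW.
Qed.

Lemma omul_xmul q r : om (xm q) r = xm (om q r).
Proof.
rewrite (omul_widen (size q).+1) ?size_xmul_le // /omul xmul_sum.
under [in RHS]eq_bigr do rewrite xmul_polyCM.
under [in LHS]eq_bigr do rewrite coef_xmul polyCD mulrDl.
rewrite !big_split /= big_ord_recl big_ord_recr /= polyC0 mul0r add0r.
by rewrite nth_default // delta0 polyC0 mul0r addr0.
Qed.

Lemma omulA p q r : om (om p q) r = om p (om q r).
Proof.
rewrite [om p q]/omul omul_suml [om p _]/omul; apply: eq_bigr => i _.
rewrite omul_polyCMl; congr (_ * _).
by elim: (nat_of_ord i) => //= k IH; rewrite omul_xmul IH.
Qed.

Lemma opow_comm P j : om P (opow sigma delta P j) = om (opow sigma delta P j) P.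
Proof. by elim: j => [|j IH] /=; rewrite ?omul1r ?omul1l // omulA IH. Qed.

Lemma in_KP_centralizer P Q : in_KP sigma delta P Q -> centralizer sigma delta P Q.
Proof.
case=> cs ->; rewrite /centralizer omul_sumr omul_suml; apply: eq_bigr => i _.
by rewrite omul_scalar_l omul_scalar_r opow_comm -omul_polyCMl.
Qed.

Lemma centralizer_subZ P Q1 Q2 c : centralizer sigma delta P Q1 ->
  centralizer sigma delta P Q2 -> centralizer sigma delta P (Q1 - c%:P%:P * Q2).
Proof.
rewrite /centralizer => hQ1 hQ2.
by rewrite omulBr omulBl omul_scalar_r omul_polyCMl hQ1 hQ2.
Qed.

Lemma e_ge2 : (2 <= e)%N.
Proof. by move: size_sigmaX; case: (size _). Qed.

Lemma sigma_comp a : sigma a = a \Po sigma 'X.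
Proof.
have sigma_sum (I : Type) (s : seq I) (F : I -> {poly K}) :
    sigma (\sum_(i <- s) F i) = \sum_(i <- s) sigma (F i).
  by elim: s => [|i s IH]; rewrite ?big_nil ?sigma0 // !big_cons sigmaD IH.
have sigmaXn i : sigma 'X^i = sigma 'X ^+ i.
  by elim: i => [|i IH]; rewrite ?sigma1 // exprS sigmaM IH -exprS.
rewrite comp_polyE -{1}[a]coefK poly_def sigma_sum.
by apply: eq_bigr => i _; rewrite sigmaZ sigmaXn.
Qed.

Lemma deg_iter_sigma j a : (size (iter j sigma a)).-1 = ((size a).-1 * e ^ j)%N.
Proof.
elim: j => [|j IH]; first by rewrite muln1.
by rewrite /= sigma_comp size_comp_poly IH expnS -mulnA (mulnC (_ ^ j)%N).
Qed.

Lemma iter_sigma_eq0 j a : (iter j sigma a == 0) = (a == 0).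
Proof. by elim: j => //= j <-; rewrite sigma_comp comp_poly_eq0 // ltnW. Qed.

Lemma iter_sigma_subZ j c a b :
  iter j sigma (a - c *: b) = iter j sigma a - c *: iter j sigma b.
Proof. by elim: j => //= j ->; rewrite sigmaB sigmaZ. Qed.

Lemma size_lead_iter_xmul i q : q != 0 ->
  size (iter i xm q) = (size q + i)%N /\
  lead_coef (iter i xm q) = iter i sigma (lead_coef q).
Proof.
move=> q_neq0; elim: i => [|i [IHsize IHlead]]; first by rewrite addn0.
set r := iter i xm q; have r_neq0 : r != 0.
  by rewrite -size_poly_eq0 IHsize addn_eq0 size_poly_eq0 (negbTE q_neq0).
have top : (xm r)`_(size r) = sigma (lead_coef r).
  rewrite coef_xmul (nth_default _ (leqnn (size r))) delta0 addr0 lead_coefE.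
  by move: r_neq0; rewrite -size_poly_eq0; case: (size r).
have size_xr : size (xm r) = (size r).+1.
  apply/eqP; rewrite eqn_leq size_xmul_le //=; rewrite ltnNge; apply/negP.
  move/leq_sizeP/(_ _ (leqnn _)); rewrite top sigma_comp => /eqP.
  by rewrite comp_poly_eq0 ?lead_coef_eq0 ?(negbTE r_neq0) // ltnW.
by rewrite /= lead_coefE size_xr /= top IHlead IHsize addnS.
Qed.

Lemma size_lead_omul p q : p != 0 -> q != 0 ->
  size (om p q) = (size p + size q).-1 /\
  lead_coef (om p q) = lead_coef p * iter (size p).-1 sigma (lead_coef q).
Proof.
move=> p_neq0 q_neq0.
have size_p : size p = (size p).-1.+1 by rewrite prednK // lt0n size_poly_eq0.
have size_q : size q = (size q).-1.+1 by rewrite prednK // lt0n size_poly_eq0.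
set k := (size p).-1 in size_p *; set l := (size q).-1 in size_q *.
have coef_om j : (om p q)`_j = \sum_(i < size p) p`_i * (iter i xm q)`_j.
  by rewrite /omul coef_sum; apply: eq_bigr => i _; rewrite coefCM.
have above i j : (size q + i <= j)%N -> (iter i xm q)`_j = 0.
  by move=> le_j; apply: nth_default; have [-> _] := size_lead_iter_xmul i q q_neq0.
have top : (om p q)`_(k + l) = lead_coef p * iter k sigma (lead_coef q).
  rewrite coef_om size_p big_ord_recr /= big1 ?add0r => [|[i lt_ik] _ /=].
    have [size_xq lead_xq] := size_lead_iter_xmul k q q_neq0.
    by rewrite lead_coefE size_p -lead_xq lead_coefE size_xq size_q addSn addnC.
  by rewrite above ?mulr0 // size_q addSn addnC ltn_add2r.
have top_neq0 : lead_coef p * iter k sigma (lead_coef q) != 0.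
  by rewrite mulf_neq0 ?iter_sigma_eq0 ?lead_coef_eq0.
have size_om : size (om p q) = (k + l).+1.
  apply/eqP; rewrite eqn_leq; apply/andP; split; last first.
    rewrite ltnNge; apply: contra top_neq0 => /leq_sizeP/(_ _ (leqnn _)).
    by rewrite top => ->.
  apply/leq_sizeP => j lt_j; rewrite coef_om big1 // => -[i lt_ip] _ /=.
  rewrite above ?mulr0 //; apply: leq_trans lt_j; rewrite size_q addSn ltnS addnC.
  by rewrite leq_add2r -ltnS -size_p.
by rewrite size_om size_p size_q addSn addnS lead_coefE size_om.
Qed.

Section PolynomialsInP.
Variable P : {poly {poly K}}.
Local Notation Pj := (opow sigma delta P).

Lemma in_KPP Q : in_KP sigma delta P Q <->
  exists cs : seq K, Q = \sum_(i < size cs) (cs`_i)%:P%:P * Pj i.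
Proof.
by split=> -[cs ->]; exists cs; apply: eq_bigr => i _; rewrite omul_scalar_l.
Qed.

Lemma sum_powers_widen (cs : seq K) N : (size cs <= N)%N ->
  \sum_(i < size cs) (cs`_i)%:P%:P * Pj i = \sum_(i < N) (cs`_i)%:P%:P * Pj i.
Proof.
move=> le_csN; rewrite (big_ord_widen N (fun i => (cs`_i)%:P%:P * Pj i) le_csN).
rewrite big_mkcond /=; apply: eq_bigr => i _; case: ltnP => // le_csi.
by rewrite nth_default // !polyC0 mul0r.
Qed.

Lemma in_KP0 : in_KP sigma delta P 0.
Proof. by exists [::]; rewrite big_ord0. Qed.

Lemma in_KPD Q1 Q2 : in_KP sigma delta P Q1 -> in_KP sigma delta P Q2 ->
  in_KP sigma delta P (Q1 + Q2).
Proof.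
move=> /in_KPP[cs1 ->] /in_KPP[cs2 ->]; apply/in_KPP.
set N := maxn (size cs1) (size cs2); exists (mkseq (fun i => cs1`_i + cs2`_i) N).
rewrite size_mkseq (sum_powers_widen cs1 N) ?leq_maxl // (sum_powers_widen cs2 N) ?leq_maxr //.
by rewrite -big_split; apply: eq_bigr => i _; rewrite nth_mkseq // !polyCD mulrDl.
Qed.

Lemma in_KP_scaled_power c j : in_KP sigma delta P (c%:P%:P * Pj j).
Proof.
apply/in_KPP; exists (rcons (nseq j 0) c); rewrite size_rcons size_nseq big_ord_recr /=.
rewrite nth_rcons size_nseq ltnn eqxx big1 ?add0r // => i _.
by rewrite nth_rcons size_nseq ltn_ord nth_nseq ltn_ord !polyC0 mul0r.
Qed.

End PolynomialsInP.

Section Centralizer.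
Variables (P : {poly {poly K}}) (n : nat).
Hypothesis size_P : size P = n.+1.
Hypothesis deg_lead_P : (0 < (size (lead_coef P)).-1 <= n)%N.

Local Notation d := (size (lead_coef P)).-1.
Local Notation Pj := (opow sigma delta P).

(* The leading-coefficient equation in degree m: comparing the leading
   coefficients of P Q and Q P for Q of degree m commuting with P gives
   lead(Q) = u with p_n sigma^n(u) = u sigma^m(p_n). *)
Definition lead_eq m (u : {poly K}) : Prop :=
  lead_coef P * iter n sigma u = u * iter m sigma (lead_coef P).

Lemma P_neq0 : P != 0.
Proof. by rewrite -size_poly_eq0 size_P. Qed.

Lemma size_opow j : size (Pj j) = (j * n).+1.
Proof.
elim: j => [|j IH] /=; first by rewrite size_poly1.
have Pj_neq0 : Pj j != 0 by rewrite -size_poly_eq0 IH.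
have [-> _] := size_lead_omul P (Pj j) P_neq0 Pj_neq0.
by rewrite size_P IH addSn /= mulSn addnS.
Qed.

Lemma centralizer_lead_eq Q m : centralizer sigma delta P Q -> size Q = m.+1 ->
  lead_eq m (lead_coef Q).
Proof.
move=> cPQ size_Q; have Q_neq0 : Q != 0 by rewrite -size_poly_eq0 size_Q.
have [_ lead_PQ] := size_lead_omul P Q P_neq0 Q_neq0.
have [_ lead_QP] := size_lead_omul Q P Q_neq0 P_neq0.
by move: lead_PQ lead_QP; rewrite /lead_eq size_P size_Q /= cPQ => <- ->.
Qed.

Lemma lead_eq_deg m u : u != 0 -> lead_eq m u ->
  (d + (size u).-1 * e ^ n = (size u).-1 + d * e ^ m)%N.
Proof.
have lead_P_neq0 : lead_coef P != 0 by rewrite lead_coef_eq0 P_neq0.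
move=> u_neq0 /(congr1 (fun a : {poly K} => (size a).-1)).
by rewrite !degM ?iter_sigma_eq0 // !deg_iter_sigma addnC.
Qed.

Lemma lead_eq_deg_unique m u v : u != 0 -> v != 0 ->
  lead_eq m u -> lead_eq m v -> (size u).-1 = (size v).-1.
Proof.
move=> u_neq0 v_neq0 eq_u eq_v.
have n_gt0 : (0 < n)%N by case/andP: deg_lead_P => /leq_trans; apply.
have e_gt1 : (1 < e ^ n)%N by rewrite -(exp1n n) ltn_exp2r ?e_ge2.
exact: degree_equation_inj e_gt1 (lead_eq_deg m u u_neq0 eq_u) (lead_eq_deg m v v_neq0 eq_v).
Qed.

(* The solutions of the leading-coefficient equation form a K-line: the
   difference of two nonzero solutions with cancelled leading terms is a
   solution of smaller degree, hence zero. *)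
Lemma lead_eq_proportional m u v : u != 0 -> v != 0 ->
  lead_eq m u -> lead_eq m v -> u = (lead_coef u / lead_coef v) *: v.
Proof.
move=> u_neq0 v_neq0 eq_u eq_v; set c := _ / _; set w := u - c *: v.
have eq_w : lead_eq m w.
  by rewrite /lead_eq iter_sigma_subZ mulrBr mulrBl eq_u -scalerAr eq_v -scalerAl.
apply/eqP; rewrite -subr_eq0 -/w; apply: contraT => w_neq0.
have size_uv : size u = size v.
  have := lead_eq_deg_unique m u v u_neq0 v_neq0 eq_u eq_v.
  move: u_neq0 v_neq0; rewrite -!size_poly_eq0.
  by case: (size u) => [|a]; case: (size v) => [|b] //= _ _ ->.
have size_u : size u = (size u).-1.+1 by rewrite prednK // lt0n size_poly_eq0.
have size_w : (size w <= (size u).-1)%N.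
  apply: size_sub_same_coef; rewrite -?size_u ?size_uv ?size_scale_leq //.
  by rewrite coefZ -{1}size_uv -!lead_coefE /c mulfVK ?lead_coef_eq0.
move: size_w; rewrite -(lead_eq_deg_unique m w u w_neq0 u_neq0 eq_w eq_u).
by rewrite leqNgt ltn_predL lt0n size_poly_eq0 w_neq0.
Qed.

Lemma centralizer_reduce Q m : centralizer sigma delta P Q -> size Q = m.+1 ->
  exists j c, (size (Q - c%:P%:P * Pj j)%R <= m)%N.
Proof.
move=> cPQ size_Q; have Q_neq0 : Q != 0 by rewrite -size_poly_eq0 size_Q.
have eq_Q := centralizer_lead_eq Q m cPQ size_Q.
have lead_Q_neq0 : lead_coef Q != 0 by rewrite lead_coef_eq0.
have n_dvd_m : (n %| m)%N.
  exact: degree_equation_dvdn e_ge2 deg_lead_P (lead_eq_deg m _ lead_Q_neq0 eq_Q).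
have size_Pj : size (Pj (m %/ n)) = m.+1 by rewrite size_opow divnK.
have eq_Pj := centralizer_lead_eq _ m (opow_comm P (m %/ n)) size_Pj.
have lead_Pj_neq0 : lead_coef (Pj (m %/ n)) != 0.
  by rewrite lead_coef_eq0 -size_poly_eq0 size_Pj.
exists (m %/ n)%N, (lead_coef (lead_coef Q) / lead_coef (lead_coef (Pj (m %/ n)))).
rewrite mul_polyC; apply: size_sub_same_coef.
- by rewrite size_Q.
- by rewrite (leq_trans (size_scale_leq _ _)) ?size_Pj.
have lead_at_m (R : {poly {poly K}}) : size R = m.+1 -> R`_m = lead_coef R.
  by rewrite lead_coefE => ->.
rewrite coefZ mul_polyC !lead_at_m //.
exact: lead_eq_proportional m _ _ lead_Q_neq0 lead_Pj_neq0 eq_Q eq_Pj.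
Qed.

Lemma centralizer_in_KP Q : centralizer sigma delta P Q -> in_KP sigma delta P Q.
Proof.
move: {2}(size Q) (leqnn (size Q)) => N; elim: N Q => [|N IH] Q size_Q cPQ.
  by move: size_Q; rewrite size_poly_leq0 => /eqP ->; apply: in_KP0.
move: size_Q; rewrite leq_eqVlt ltnS => /orP[/eqP size_Q|le_QN]; last exact: IH _ le_QN cPQ.
have [j [c size_R]] := centralizer_reduce Q N cPQ size_Q.
rewrite -(subrK (c%:P%:P * Pj j) Q); apply: in_KPD (in_KP_scaled_power P c j).
exact: IH _ size_R (centralizer_subZ P Q (Pj j) c cPQ (opow_comm P j)).
Qed.

End Centralizer.

End Ore.

Theorem proposition5p6 (K : fieldType) (sigma delta : {poly K} -> {poly K})
  (Hsigma : is_Kalg_endo sigma)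
  (HsigmaY : (2 < size (sigma 'X))%N)
  (Hdelta : is_sigma_derivation sigma delta)
  (P : {poly {poly K}}) (n : nat)
  (HdegP : size P = n.+1) (Hn : (0 < n)%N)
  (Hlead : (0 < (size (lead_coef P)).-1 <= n)%N) :
  forall Q : {poly {poly K}},
    centralizer sigma delta P Q <-> in_KP sigma delta P Q.
Proof.
move=> Q; split.
- exact: centralizer_in_KP Hsigma Hdelta HsigmaY P n HdegP Hlead Q.
- exact: in_KP_centralizer Hsigma Hdelta P Q.
Qed.
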